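(* Let $U\in\mathbb R^{n\times r}$ and $V\in\mathbb R^{T\times r}$ have orthonormal columns, and let $\mathbf T=\{UA^\top+BV^\top+a\mathbf 1^\top: A\in\mathbb R^{T\times r},B\in\mathbb R^{n\times r},a\in\mathbb R^n\}$. Let $\rho=(I-VV^\top)\mathbf 1$ and assume $\rho\ne 0$. Then the orthogonal projection onto $\mathbf T^\perp$ is, for every $X\in\mathbb R^{n\times T}$, $$P_{\mathbf T^\perp}(X)=(I-UU^\top)\,X\Big(I-\frac{\rho\rho^\top}{\|\rho\|^2}\Big)(I-VV^\top).$$
   Context: $\mathbf 1\in\mathbb R^T$ is the all-ones vector; orthogonality is with respect to the Frobenius inner product. *)

From HB Require Import structures.
From mathcomp Require Import all_boot all_order all_algebra.
Set Implicit Arguments. Unset Strict Implicit. Unset Printing Implicit Defensive.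
Import Order.TTheory GRing.Theory Num.Theory.
Local Open Scope ring_scope.

Definition frob (R : realFieldType) (m n : nat) (X Y : 'M[R]_(m, n)) : R :=
  \sum_(i < m) \sum_(j < n) X i j * Y i j.

Definition ones (R : realFieldType) (T : nat) : 'cV[R]_T := const_mx 1.

Definition inTspace (R : realFieldType) (n T r : nat)
  (U : 'M[R]_(n, r)) (V : 'M[R]_(T, r)) (X : 'M[R]_(n, T)) : Prop :=
  exists (A : 'M[R]_(T, r)) (B : 'M[R]_(n, r)) (a : 'cV[R]_n),
    X = U *m A^T + B *m V^T + a *m (ones R T)^T.

Definition orth_compl (R : realFieldType) (m n : nat)
  (S : 'M[R]_(m, n) -> Prop) (Y : 'M[R]_(m, n)) : Prop :=
  forall Z, S Z -> frob Y Z = 0.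

Definition is_orth_proj (R : realFieldType) (m n : nat)
  (W : 'M[R]_(m, n) -> Prop) (P : 'M[R]_(m, n) -> 'M[R]_(m, n)) : Prop :=
  forall X, W (P X) /\ orth_compl W (X - P X).

From HB Require Import structures.
From mathcomp Require Import all_boot all_order all_algebra.
Import Order.TTheory GRing.Theory Num.Theory.
Local Open Scope ring_scope.

(* Write P_U = I - UU^T and Q = (I - rho rho^T/|rho|^2)(I - VV^T).  The adjoint of
   X |-> P_U X Q for the Frobenius product is Z |-> P_U Z Q^T, and it kills T because
   P_U U = 0, Q V = 0 and Q 1 = 0 (as (I - VV^T) 1 = rho); so P_U X Q is orthogonal to T.
   Conversely, since rho is fixed by the symmetric idempotent I - VV^T,
   X - P_U X Q = U (U^T X) + (P_U X V) V^T + (P_U X rho / |rho|^2) rho^T, and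
   rho^T = 1^T - (1^T V) V^T, so X - P_U X Q lies in T, hence is orthogonal to T^perp. *)

Section Frobenius.
Context {R : realFieldType}.

Lemma frob_tr m n (X Y : 'M[R]_(m, n)) : frob X Y = \tr (X *m Y^T).
Proof.
rewrite /frob /mxtrace; apply: eq_bigr => i _; rewrite !mxE.
by under [RHS]eq_bigr do rewrite mxE.
Qed.

Lemma frobC m n (X Y : 'M[R]_(m, n)) : frob X Y = frob Y X.
Proof. by rewrite /frob; apply: eq_bigr => i _; apply: eq_bigr => j _; rewrite mulrC. Qed.

Lemma frob_mulmx m n p q (A : 'M[R]_(m, p)) (X : 'M[R]_(p, q))
    (B : 'M[R]_(q, n)) (Y : 'M[R]_(m, n)) :
  frob (A *m X *m B) Y = frob X (A^T *m Y *m B^T).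
Proof.
by rewrite !frob_tr -!mulmxA mxtrace_mulC !trmx_mul !trmxK !mulmxA.
Qed.

Lemma frob_cV m (u v : 'cV[R]_m) : (u^T *m v) 0 0 = frob u v.
Proof.
rewrite /frob mxE; apply: eq_bigr => i _.
by rewrite big_ord1 mxE.
Qed.

Lemma frob_eq0 m n (X : 'M[R]_(m, n)) : frob X X = 0 -> X = 0.
Proof.
have sqrX_ge0 i j : 0 <= X i j * X i j by rewrite -expr2 sqr_ge0.
move=> /(psumr_eq0P (fun i _ => sumr_ge0 _ (fun j _ => sqrX_ge0 i j))) X0.
apply/matrixP => i j; rewrite mxE.
have Xi0 := psumr_eq0P (fun j _ => sqrX_ge0 i j) (X0 i isT).
by apply/eqP; rewrite -sqrf_eq0 expr2 Xi0.
Qed.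

Lemma sub_orth_compl2 m n (S : 'M[R]_(m, n) -> Prop) X :
  S X -> orth_compl (orth_compl S) X.
Proof. by move=> SX Y SY; rewrite frobC; apply: SY. Qed.

End Frobenius.

Section ComplementProjector.
Context {R : realFieldType} {m k : nat} (V : 'M[R]_(m, k)).
Local Notation P := (1%:M - V *m V^T).

Lemma trmx_projC : P^T = P.
Proof. by rewrite linearB /= trmx1 trmx_mul trmxK. Qed.

Hypothesis hV : V^T *m V = 1%:M.

Lemma projC_mulV : P *m V = 0.
Proof. by rewrite mulmxBl mul1mx -mulmxA hV mulmx1 subrr. Qed.

Lemma projC_idem : P *m P = P.
Proof.
rewrite {1}mulmxBl mul1mx -mulmxA -[V^T *m P]trmxK trmx_mul trmxK.
by rewrite trmx_projC projC_mulV trmx0 mulmx0 subr0.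
Qed.

End ComplementProjector.

Section RankOneProjector.
Context {R : realFieldType} {m : nat} {rho : 'cV[R]_m}.
Local Notation c := ((rho^T *m rho) 0 0)^-1.

Lemma rank1_proj_mul_self : rho != 0 -> (1%:M - c *: (rho *m rho^T)) *m rho = 0.
Proof.
move=> rho_neq0; have s_neq0 : (rho^T *m rho) 0 0 != 0.
  by apply: contra rho_neq0; rewrite frob_cV => /eqP/frob_eq0->.
set s := (rho^T *m rho) 0 0; have rr : rho^T *m rho = s%:M := mx11_scalar _.
rewrite mulmxBl mul1mx -scalemxAl -mulmxA rr.
by rewrite mul_mx_scalar scalerA mulVf // scale1r subrr.
Qed.

Lemma rank1_proj_mul_fixed {M : 'M[R]_m} : M^T = M -> M *m rho = rho ->
  (1%:M - c *: (rho *m rho^T)) *m M = M - c *: (rho *m rho^T).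
Proof.
move=> MT Mrho; rewrite mulmxBl mul1mx -scalemxAl -mulmxA.
by rewrite -[rho^T *m M]trmxK trmx_mul trmxK MT Mrho.
Qed.

End RankOneProjector.

Section TangentSpace.
Context {R : realFieldType} {n T r : nat} (U : 'M[R]_(n, r)) (V : 'M[R]_(T, r)).

Lemma inTspaceD X Y : inTspace U V X -> inTspace U V Y -> inTspace U V (X + Y).
Proof.
move=> [A [B [a ->]]] [A' [B' [a' ->]]]; exists (A + A'), (B + B'), (a + a').
by rewrite linearD /= !mulmxDr !mulmxDl addrACA; congr (_ + _); rewrite addrACA.
Qed.

Lemma inTspace_mulU (A : 'M[R]_(r, T)) : inTspace U V (U *m A).
Proof. by exists A^T, 0, 0; rewrite trmxK !mul0mx !addr0. Qed.

Lemma inTspace_mulVT (B : 'M[R]_(n, r)) : inTspace U V (B *m V^T).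
Proof. by exists 0, B, 0; rewrite trmx0 mulmx0 mul0mx add0r addr0. Qed.

Lemma inTspace_mul_projC_ones (a : 'cV[R]_n) :
  inTspace U V (a *m ((1%:M - V *m V^T) *m ones R T)^T).
Proof.
exists 0, (- (a *m (ones R T)^T *m V)), a.
rewrite trmx_mul trmx_projC mulmxBr mulmx1 trmx0 mulmx0 add0r.
by rewrite mulmxBr mulNmx addrC !mulmxA.
Qed.

Lemma mulmx_orth_compl_inTspace (P : 'M[R]_n) (Q : 'M[R]_T) X :
    P^T *m U = 0 -> Q *m V = 0 -> Q *m ones R T = 0 ->
  orth_compl (inTspace U V) (P *m X *m Q).
Proof.
move=> PU QV Q1 _ [A [B [a ->]]]; rewrite frob_mulmx.
rewrite !mulmxDr !mulmxDl !mulmxA PU !mul0mx add0r -!mulmxA -!trmx_mul QV Q1.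
by rewrite !trmx0 !mulmx0 addr0 frob_tr trmx0 mulmx0 mxtrace0.
Qed.

End TangentSpace.

Theorem lemma4 (R : realFieldType) (n T r : nat)
  (U : 'M[R]_(n, r)) (V : 'M[R]_(T, r))
  (hU : U^T *m U = 1%:M) (hV : V^T *m V = 1%:M) :
  let rho : 'cV[R]_T := (1%:M - V *m V^T) *m ones R T in
  rho != 0 ->
  is_orth_proj (orth_compl (inTspace U V))
    (fun X : 'M[R]_(n, T) =>
       (1%:M - U *m U^T) *m X
       *m (1%:M - ((rho^T *m rho) 0 0)^-1 *: (rho *m rho^T))
       *m (1%:M - V *m V^T)).
Proof.
move=> rho rho_neq0 X; set c := (_ 0 0)^-1.
have projC_rho : (1%:M - V *m V^T) *m rho = rho by rewrite mulmxA projC_idem.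
split.
  rewrite /= -[in Y in orth_compl _ Y]mulmxA.
  apply: mulmx_orth_compl_inTspace.
  - by rewrite trmx_projC projC_mulV.
  - by rewrite -mulmxA projC_mulV ?mulmx0.
  - by rewrite -mulmxA rank1_proj_mul_self.
apply: sub_orth_compl2.
rewrite /= -mulmxA (rank1_proj_mul_fixed (trmx_projC V) projC_rho).
set W := (1%:M - U *m U^T) *m X.
have -> : X - W *m (1%:M - V *m V^T - c *: (rho *m rho^T)) =
    U *m (U^T *m X) + (W *m V *m V^T + (c *: (W *m rho)) *m rho^T).
  have XW : X - W = U *m (U^T *m X).
    by rewrite /W mulmxBl mul1mx opprB addrC subrK mulmxA.
  rewrite !mulmxBr mulmx1 -scalemxAr -scalemxAl (mulmxA W V) (mulmxA W rho).
  by rewrite -XW !opprB (addrC (c *: _)) [_ - W]addrC -!addrA.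
apply: inTspaceD; first exact: inTspace_mulU.
by apply: inTspaceD; [exact: inTspace_mulVT | exact: inTspace_mul_projC_ones].
Qed.
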